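(* Let $(\Sigma_A,T)$ be a topologically mixing one-sided subshift of finite type, $\Psi=\{\psi_n\}_{n\ge1}\in\mathcal F^-(\Sigma_A,T)$, $Q(s)=P(s\Psi)$, equip $\Sigma_A$ with the metric $d_\Psi$, and let $\mu_{\max}$ be the Gibbs measure of the zero potential (the measure of maximal entropy). Then for every $x\in\Sigma_A$, $\underline d_{\mu_{\max}}(x)=-\dfrac{Q(0)}{\liminf_{n\to\infty}\frac1n\psi_n(x)}$ and $\overline d_{\mu_{\max}}(x)=-\dfrac{Q(0)}{\limsup_{n\to\infty}\frac1n\psi_n(x)}$.
   Context: A sequence $\Phi=\{\phi_n\}_{n\ge1}$ of continuous functions on $\Sigma_A$ is almost additive if $|\phi_{n+m}(x)-\phi_n(x)-\phi_m(T^nx)|\le C$; bounded variation if $\sup\{|\phi_n(x)-\phi_n(y)|:x|_n=y|_n\}\le C'$ for all $n$; negative if there is $c>0$ with $\phi_n(x)\le-cn$ and $n\mapsto\phi_n(x)$ decreasing. $\mathcal F^-(\Sigma_A,T)$: negative almost additive potentials with bounded variation. Pressure: $P(\Phi)=\lim_n\frac1n\log\sum_{|w|=n}\exp(\sup_{x\in[w]}\phi_n(x))$. Weak Gibbs metric: $d_\Psi(x,y)=\sup_{z\in[x\wedge y]}\exp(\psi_{|x\wedge y|}(z))$, where $x\wedge y$ is the longest common prefix and $\psi_0:=0$. The measure $\mu_{\max}$ satisfies $\mu_{\max}([x|_n])\asymp\exp(-nQ(0))$ uniformly, with $Q(0)=h_{top}(T)$. Local dimensions: $\underline d_\mu(x)=\liminf_{r\to0}\frac{\log\mu(B(x,r))}{\log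 r}$, $\overline d_\mu(x)=\limsup_{r\to0}\frac{\log\mu(B(x,r))}{\log r}$, balls with respect to $d_\Psi$. *)

From HB Require Import structures.
From mathcomp Require Import all_boot all_order all_algebra.
From mathcomp Require Import all_classical all_reals all_analysis.
Set Implicit Arguments. Unset Strict Implicit. Unset Printing Implicit Defensive.
Import Order.TTheory GRing.Theory Num.Theory numFieldNormedType.Exports.
Local Open Scope classical_set_scope.
Local Open Scope ring_scope.

HB.instance Definition _ (k : nat) := isPointed.Build 'I_k.+1 ord0.

Section Symbolic.
Variables (k : nat) (A : 'I_k.+1 -> 'I_k.+1 -> bool).

Definition seqs := nat -> 'I_k.+1.

Definition SigmaA : set seqs := [set x | forall n, A (x n) (x n.+1)].

Definition shift (x : seqs) : seqs := fun n => x n.+1.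

Definition agree (m : nat) (x y : seqs) := forall i, (i < m)%N -> x i = y i.

Definition cyl (x : seqs) (m : nat) : set seqs := [set z | SigmaA z /\ agree m z x].

Definition wcyl n (w : n.-tuple 'I_k.+1) : set seqs :=
  [set z | SigmaA z /\ forall i : 'I_n, z i = tnth w i].

(* topological mixing of (Sigma_A, T), tested on the basis of cylinder sets *)
Definition topologically_mixing : Prop :=
  forall (x y : seqs) (m : nat), SigmaA x -> SigmaA y ->
    exists N, forall n, (N <= n)%N ->
      exists z, SigmaA z /\ agree m z x /\ agree m (iter n shift z) y.

Variable R : realType.

(* continuity of f : Sigma_A -> R for the product topology *)
Definition cont_on_SigmaA (f : seqs -> R) : Prop :=
  forall x, SigmaA x -> forall e : R, 0 < e ->
    exists m, forall y, SigmaA y -> agree m y x -> `|f y - f x| < e.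

(* sequences of potentials phi_n, n >= 1 (the value at index 0 is unused) *)
Definition almost_additive (phi : nat -> seqs -> R) : Prop :=
  exists C : R, forall n m, (0 < n)%N -> (0 < m)%N -> forall x, SigmaA x ->
    `|phi (n + m)%N x - phi n x - phi m (iter n shift x)| <= C.

Definition bounded_variation (phi : nat -> seqs -> R) : Prop :=
  exists C' : R, forall n, (0 < n)%N -> forall x y, SigmaA x -> SigmaA y ->
    agree n x y -> `|phi n x - phi n y| <= C'.

Definition negative_pot (phi : nat -> seqs -> R) : Prop :=
  exists c : R, 0 < c /\
    (forall n, (0 < n)%N -> forall x, SigmaA x -> phi n x <= - c * n%:R) /\
    (forall n, (0 < n)%N -> forall x, SigmaA x -> phi n.+1 x <= phi n x).

Definition in_Fminus (phi : nat -> seqs -> R) : Prop :=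
  (forall n, (0 < n)%N -> cont_on_SigmaA (phi n)) /\
  almost_additive phi /\ bounded_variation phi /\ negative_pot phi.

Definition pressure (phi : nat -> seqs -> R) : R :=
  limn ((fun n : nat =>
    ln (\sum_(w : n.-tuple 'I_k.+1 | `[< wcyl w !=set0 >])
          expR (sup [set phi n x | x in wcyl w])) / n%:R) : R^nat).

Definition psi0 (psi : nat -> seqs -> R) (m : nat) (z : seqs) : R :=
  if m == 0%N then 0 else psi m z.

Definition dPsi (psi : nat -> seqs -> R) (x y : seqs) : R :=
  match pselect (exists n, x n != y n) with
  | left h => let m := ex_minn h in sup [set expR (psi0 psi m z) | z in cyl x m]
  | right _ => 0
  end.

Definition dball (psi : nat -> seqs -> R) (x : seqs) (r : R) : set seqs :=
  [set y | SigmaA y /\ dPsi psi x y < r].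

(* sets generating the Borel sigma-algebra of the shift space: cylinders *)
Definition cylinders : set (set seqs) :=
  [set C | exists (m : nat) (w : seqs), C = [set z | agree m z w]].

Definition shspace := @g_sigma_algebraType (nat -> 'I_k.+1) cylinders.

(* lower/upper local dimensions w.r.t. balls of d_Psi:
   liminf_{r->0} = sup_{delta>0} inf_{0<r<delta}, limsup dually *)
Definition lower_locdim (mu : set shspace -> \bar R) (psi : nat -> seqs -> R)
    (x : seqs) : \bar R :=
  ereal_sup [set ereal_inf [set (ln (fine (mu (dball psi x r))) / ln r)%:E
                           | r in `]0, delta[ ] | delta in `]0, +oo[ ].

Definition upper_locdim (mu : set shspace -> \bar R) (psi : nat -> seqs -> R)
    (x : seqs) : \bar R :=
  ereal_inf [set ereal_sup [set (ln (fine (mu (dball psi x r))) / ln r)%:E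
                           | r in `]0, delta[ ] | delta in `]0, +oo[ ].

(* mu is the Gibbs measure for the zero potential (the measure of maximal
   entropy): a T-invariant probability on Sigma_A with
   mu([x|n]) asymp exp(-n P(0)) uniformly *)
Definition is_mu_max (mu : {measure set shspace -> \bar R}) : Prop :=
  mu [set: shspace] = 1%E /\ mu (~` SigmaA) = 0%E /\
  (forall E : set shspace, measurable E -> mu (shift @^-1` E) = mu E) /\
  exists C : R, 0 < C /\ forall x, SigmaA x -> forall n : nat,
    ((C^-1)%:E <= mu (cyl x n) * (expR (n%:R * pressure (fun _ _ => 0)))%:E
    <= C%:E)%E.

End Symbolic.

From Pilot Require Import Defs.
From HB Require Import structures.
From mathcomp Require Import all_boot all_order all_algebra.
From mathcomp Require Import all_classical all_reals all_analysis.
From mathcomp Require Import ring lra zify.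
Set Implicit Arguments. Unset Strict Implicit. Unset Printing Implicit Defensive.
Import Order.TTheory GRing.Theory Num.Theory numFieldNormedType.Exports.
Local Open Scope classical_set_scope.
Local Open Scope ring_scope.

(* Balls of d_Psi about x are cylinders: d_Psi(x, y) is the diameter
   diam[x|m] = sup_{z in [x|m]} exp psi_m(z) of the cylinder of the common
   prefix of x and y, so B(x, r) = [x|M] for the least M with diam[x|M] < r.
   Bounded variation gives diam[x|M] ~ exp psi_M(x), almost additivity gives
   psi_(M+1)(x) = psi_M(x) + O(1), and the Gibbs property gives
   ln mu_max[x|M] = - M Q(0) + O(1).  Hence ln mu_max(B(x, r)) / ln r is
   Q(0) / (- psi_M(x) / M) + o(1) for every small r, and every large M is
   matched in this way by some small r.  So the cluster values of the ratio as
   r -> 0 are those of t |-> - Q(0) / t along psi_M(x) / M, and this map is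
   continuous and increasing on t <= - c, hence commutes with liminf and
   limsup. *)

Section liminf_characterization.
Variable R : realType.
Implicit Types (u : R^o^nat) (l : R).

Definition is_liminf u l :=
  (forall e : R, 0 < e -> exists N, forall n, (N <= n)%N -> l - e <= u n) /\
  (forall e : R, 0 < e -> forall N, exists2 n, (N <= n)%N & u n <= l + e).

Lemma limn_infP u : bounded_fun u -> is_liminf u (limn_inf u).
Proof.
move=> bu; have ub := bounded_fun_has_ubound bu.
have lb := bounded_fun_has_lbound bu.
rewrite limn_infE //.
have infs_le N n : (N <= n)%N -> infs u N <= u n.
  by move=> Nn; apply: ge_inf; [exact: has_lbound_sdrop|exists n].
have hs : has_sup (range (infs u)).
  by split; [exists (infs u 0%N); exists 0%N|exact: bounded_fun_has_ubound_infs].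
split=> [e e0|e e0 N].
  have [_ [N _ <-] hN] := sup_adherent e0 hs.
  by exists N => n Nn; apply: le_trans (ltW hN) (infs_le _ _ Nn).
have hi : has_inf (sdrop u N).
  by split; [exists (u N); exists N => /=|exact: has_lbound_sdrop].
have [_ [n /= Nn <-] hn] := inf_adherent e0 hi.
exists n => //; apply: le_trans (ltW hn) _; rewrite lerD2r.
by apply: ub_le_sup; [case: hs|exists N].
Qed.

Lemma is_liminf_limn_supN u : bounded_fun u -> is_liminf (-%R \o u) (- limn_sup u).
Proof.
move=> bu; have := @limn_infP (- u) (bounded_funN bu).
suff -> : limn_inf (- u) = - limn_sup u by [].
rewrite /limn_inf /limn_sup (_ : infs (- u) = - sups u); last exact: infsN.
apply: limN; apply/cvg_ex; exists (inf (range (sups u))).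
by apply: cvg_sups_inf; [exact: bounded_fun_has_ubound|exact: bounded_fun_has_lbound].
Qed.

Lemma is_liminf_le u l N0 b :
  is_liminf u l -> (forall n, (N0 <= n)%N -> u n <= b) -> l <= b.
Proof.
move=> [ev _] ub; apply/ler_addgt0Pr => e e0.
have [N hN] := ev e e0; have := hN _ (leq_maxl N N0); have := ub _ (leq_maxr N N0).
lra.
Qed.

Lemma is_liminf_ge u l N0 b :
  is_liminf u l -> (forall n, (N0 <= n)%N -> b <= u n) -> b <= l.
Proof.
move=> [_ fr] lb; apply/ler_addgt0Pr => e e0.
have [n Nn hn] := fr e e0 N0; have := lb n Nn; lra.
Qed.

Lemma is_liminf_comp (h : R -> R) u l :
  {homo h : s t / s <= t} -> {for l, continuous h} ->
  is_liminf u l -> is_liminf (h \o u) (h l).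
Proof.
move=> hmono hcont [ev fr].
have near_l e : 0 < e -> exists2 d, 0 < d & h l - e <= h (l - d) /\ h (l + d) <= h l + e.
  move=> e0; have /cvgrPdist_lt /(_ e e0) := hcont.
  move=> /nbhs_ballP [d /= d0 hd].
  have hd' t : `|t| < d -> `|h l - h (l + t)| < e.
    by move=> tl; apply: hd; rewrite /ball /= opprD addNKr normrN.
  exists (d / 2); first by rewrite divr_gt0.
  have d2 : `|d / 2| < d by rewrite gtr0_norm ?divr_gt0 // ltr_pdivrMr //; lra.
  have := hd' _ d2; have := hd' (- (d / 2)); rewrite normrN => /(_ d2).
  by rewrite !ltr_norml; lra.
split=> [e e0|e e0 N].
  have [d d0 [hd _]] := near_l e e0; have [N hN] := ev d d0.
  by exists N => n Nn; apply: le_trans hd (hmono _ _ (hN n Nn)).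
have [d d0 [_ hd]] := near_l e e0; have [n Nn hn] := fr d d0 N.
by exists n => //; apply: le_trans (hmono _ _ hn) hd.
Qed.

Lemma is_liminf_compN (h : R -> R) u l :
  {homo h : s t / s <= t} -> {for l, continuous h} ->
  is_liminf (-%R \o u) (- l) -> is_liminf (-%R \o (h \o u)) (- h l).
Proof.
move=> hmono hcont ul; pose h' t := - h (- t).
have h'mono : {homo h' : s t / s <= t} by move=> s t st; rewrite lerN2 hmono // lerN2.
have h'cont : {for - l, continuous h'}.
  apply: continuousN; apply: continuous_comp; first exact: opp_continuous.
  by rewrite /= opprK.
have := is_liminf_comp h'mono h'cont ul; rewrite /h' opprK.
by congr is_liminf; apply/funext => n /=; rewrite opprK.
Qed.

End liminf_characterization.

Section limits_at0.
Variable R : realType.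
Implicit Types (G : R -> R) (f : R^o^nat) (l : R).

Definition lim_inf0 G : \bar R :=
  ereal_sup [set ereal_inf [set (G r)%:E | r in `]0, d[] | d in `]0, +oo[].

Definition lim_sup0 G : \bar R :=
  ereal_inf [set ereal_sup [set (G r)%:E | r in `]0, d[] | d in `]0, +oo[].

Definition asymp_match G f :=
  (forall e : R, 0 < e -> forall N, exists2 d : R, 0 < d &
     forall r, 0 < r -> r < d -> exists2 M, (N <= M)%N & `|G r - f M| <= e) /\
  (forall e d : R, 0 < e -> 0 < d -> exists N, forall M, (N <= M)%N ->
     exists2 r, 0 < r < d & `|G r - f M| <= e).

Lemma asymp_matchN G f :
  asymp_match G f -> asymp_match (fun r => - G r) (-%R \o f).
Proof.
have dN a b : `|- a - (-%R \o f) b| = `|a - f b| by rewrite /= -opprD normrN.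
move=> [small large]; split=> [e e0 N|e d e0 d0].
  have [d d0 hd] := small e e0 N; exists d => // r r0 rd.
  by have [M NM hM] := hd r r0 rd; exists M; rewrite // dN.
have [N hN] := large e d e0 d0; exists N => M NM.
by have [r hr hM] := hN M NM; exists r; rewrite // dN.
Qed.

Lemma lim_inf0_asymp G f l : asymp_match G f -> is_liminf f l -> lim_inf0 G = l%:E.
Proof.
move=> [small large] [ev fr]; apply/eqP; rewrite eq_le; apply/andP; split.
  apply/lee_addgt0Pr => e e0; apply: ge_ereal_sup => _ [d /= d0 <-].
  have e2 : 0 < e / 2 by rewrite divr_gt0.
  rewrite in_itv /= andbT in d0.
  have [N hN] := large _ _ e2 d0; have [M NM hM] := fr _ e2 N.
  have [r /andP[r0 rd] hr] := hN M NM.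
  have Gr : [set (G r)%:E | r in `]0, d[] (G r)%:E.
    by exists r => //=; rewrite in_itv /= r0 rd.
  apply: le_trans (ereal_inf_lbound Gr) _.
  by rewrite -EFinD lee_fin; move: hr; rewrite ler_norml; lra.
apply/lee_subgt0Pr => e e0.
have e2 : 0 < e / 2 by rewrite divr_gt0.
have [N hN] := ev _ e2; have [d d0 hd] := small _ e2 N.
apply: le_trans (ereal_sup_ubound _); last by exists d => //=; rewrite in_itv /= d0.
apply: le_ereal_inf_tmp => y [r + <-]; rewrite /= in_itv /= => /andP[r0 rd].
have [M NM hM] := hd r r0 rd; have := hN M NM.
by rewrite -EFinB lee_fin; move: hM; rewrite ler_norml; lra.
Qed.

Lemma lim_sup0N G : lim_sup0 G = (- lim_inf0 (fun r => - G r)%R)%E.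
Proof.
rewrite /lim_inf0 -ereal_infN; congr ereal_inf; rewrite image_comp.
apply: eq_imagel => d _ /=.
suff -> : [set (- G r)%:E | r in `]0, d[] = -%E @` [set (G r)%:E | r in `]0, d[].
  by rewrite ereal_infN oppeK.
by rewrite image_comp.
Qed.

Lemma lim_sup0_asymp G f l :
  asymp_match G f -> is_liminf (-%R \o f) (- l) -> lim_sup0 G = l%:E.
Proof.
move=> Gf hl; rewrite lim_sup0N (lim_inf0_asymp (asymp_matchN Gf) hl).
by rewrite EFinN oppeK.
Qed.

End limits_at0.

Lemma ratio_approx (R : realType) (c K T Phi P e : R) :
  0 < c -> 0 <= K -> 0 <= T -> 0 <= Phi -> 0 <= P -> 0 < e ->
  exists N, forall (M : nat) (beta num D : R), (N <= M)%N -> c <= beta <= K ->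
    `|D - M%:R * beta| <= T -> `|num - M%:R * P| <= Phi ->
    `|num / D - P / beta| <= e.
Proof.
move=> c0 K0 T0 Phi0 P0 e0; set W := Phi * K + P * T.
have W0 : 0 <= W by rewrite /W; apply: addr_ge0; apply: mulr_ge0.
have ce0 : 0 < c * e by apply: mulr_gt0.
exists (Num.truncn ((T + W / (c * e)) / c)).+1.
move=> M beta num D NM /andP[cb bK] hD hnum.
have b0 : 0 < beta by lra.
have lowD : W / (c * e) < M%:R * c - T.
  have : (T + W / (c * e)) / c < M%:R.
    by apply: lt_le_trans (truncnS_gt _) _; rewrite ler_nat.
  rewrite ltr_pdivrMr //; lra.
have D0 : 0 < M%:R * c - T.
  by apply: le_lt_trans lowD; rewrite divr_ge0 // ltW.
have Mcb : M%:R * c <= M%:R * beta by apply: ler_wpM2l.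
have hDb : (M%:R * c - T) * c <= D * beta.
  by apply: ler_pM; [lra|lra|move: hD; rewrite ler_norml; lra|].
have Db0 : 0 < D * beta by apply: lt_le_trans hDb; apply: mulr_gt0.
have -> : num / D - P / beta =
    ((num - M%:R * P) * beta + P * (M%:R * beta - D)) / (D * beta).
  by field; apply/andP; split; apply/lt0r_neq0 => //; move: Db0; rewrite pmulr_lgt0.
rewrite normrM normfV (gtr0_norm Db0) ler_pdivrMr //.
apply: le_trans (ler_normD _ _) _; rewrite !normrM (gtr0_norm b0) (ger0_norm P0).
have h1 : `|num - M%:R * P| * beta <= Phi * K.
  by apply: ler_pM; rewrite ?normr_ge0 //; lra.
have h2 : P * `|M%:R * beta - D| <= P * T by rewrite distrC; apply: ler_wpM2l.
have hW : W <= (M%:R * c - T) * c * e.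
  by move: lowD; rewrite ltr_pdivrMr // mulrA => /ltW.
have : (M%:R * c - T) * c * e <= D * beta * e by apply: ler_wpM2r => //; exact: ltW.
move: hW; rewrite /W; lra.
Qed.

Lemma ln_sandwich (R : realType) (a : \bar R) (s K : R) : 0 < K -> (0 <= a)%E ->
  ((K^-1)%:E <= a * (expR s)%:E <= K%:E)%E -> exists2 v, a = v%:E & `|ln v + s| <= ln K.
Proof.
move=> K0; case: a => [v| |] a0 /andP[lo hi].
- rewrite -EFinM !lee_fin in lo hi.
  have vs0 : 0 < v * expR s by apply: lt_le_trans lo; rewrite invr_gt0.
  have v0 : 0 < v by move: vs0; rewrite pmulr_lgt0 ?expR_gt0.
  have pos (y : R) : 0 < y -> y \is Num.pos by rewrite posrE.
  have ln_lo : ln K^-1 <= ln (v * expR s) by rewrite ler_ln ?pos ?invr_gt0.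
  have ln_hi : ln (v * expR s) <= ln K by rewrite ler_ln ?pos.
  move: ln_lo ln_hi; rewrite lnM ?pos ?expR_gt0 // expRK lnV ?pos // => ln_lo ln_hi.
  by exists v; rewrite // ler_norml; apply/andP; split; lra.
- by move: hi; rewrite gt0_mulye ?lte_fin ?expR_gt0 // leye_eq.
- by move: a0; rewrite leeNy_eq.
Qed.

Lemma pressure0_ge0 (R : realType) k (A : 'I_k.+1 -> 'I_k.+1 -> bool) (x : seqs k) :
  SigmaA A x -> 0 <= pressure A (fun _ _ => 0 : R).
Proof.
move=> Sx; rewrite /pressure; set u := (fun n : nat => _).
have [cu|] := pselect (cvgn u); last by move=> /dvgP ->.
apply: limr_ge => //; apply: nearW => n; apply: divr_ge0 => //; apply: ln_ge0.
pose w : n.-tuple 'I_k.+1 := [tuple x i | i < n].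
have wx : wcyl A w x by split => // i; rewrite tnth_mktuple.
rewrite (bigD1 w) /=; last by apply/asboolP; exists x.
have -> : [set (0:R) | _ in wcyl A w] = [set 0].
  by apply/seteqP; split => [r [z _ <-] //|r ->]; exists x.
by rewrite sup1 expR0 lerDl sumr_ge0 // => v _; rewrite ltW ?expR_gt0.
Qed.

Lemma SigmaA_iter_shift k (A : 'I_k.+1 -> 'I_k.+1 -> bool) n (z : seqs k) :
  SigmaA A z -> SigmaA A (iter n (@Defs.shift k) z).
Proof. by elim: n z => [//|n IH] z Sz i; rewrite iterS; apply: (IH z Sz i.+1). Qed.

Lemma SigmaA_lbound (R : realType) k (A : 'I_k.+1 -> 'I_k.+1 -> bool)
    (f : seqs k -> R) (C' : R) :
  (forall y z, SigmaA A y -> SigmaA A z -> y 0%N = z 0%N -> `|f y - f z| <= C') ->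
  exists L, forall y, SigmaA A y -> L <= f y.
Proof.
move=> fvar.
have /choice [g hg] : forall s, exists L : R,
    forall y, SigmaA A y -> y 0%N = s -> L <= f y.
  move=> s; have [[y0 [Sy0 y0s]]|none] := pselect (exists y, SigmaA A y /\ y 0%N = s).
    exists (f y0 - C') => y Sy ys.
    by move: (fvar y y0 Sy Sy0 (etrans ys (esym y0s))); rewrite ler_norml; lra.
  by exists 0 => y Sy ys; exfalso; apply: none; exists y.
exists (- \sum_s `|g s|) => y Sy; apply: le_trans (hg _ y Sy erefl).
rewrite (bigD1 (y 0%N)) //= opprD lerBlDr.
have := ler_norm (- g (y 0%N)); rewrite normrN.
have : 0 <= \sum_(s | s != y 0%N) `|g s| by rewrite sumr_ge0.
lra.
Qed.

Lemma ge_lnE (R : realType) (y r : R) : 0 < r -> (y <= ln r) = (expR y <= r).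
Proof. by move=> r0; rewrite -ler_expR lnK // posrE. Qed.

Lemma le_lnE (R : realType) (y r : R) : 0 < r -> (ln r <= y) = (r <= expR y).
Proof. by move=> r0; rewrite -ler_expR lnK // posrE. Qed.

Section local_dimension.
Variables (R : realType) (k : nat) (A : 'I_k.+1 -> 'I_k.+1 -> bool).
Variables (psi : nat -> seqs k -> R) (C C' c L : R) (x : seqs k).
Hypothesis psi_almost_add : forall n m, (0 < n)%N -> (0 < m)%N ->
  forall z, SigmaA A z -> `|psi (n + m)%N z - psi n z - psi m (iter n (@Defs.shift k) z)| <= C.
Hypothesis psi_bounded_var : forall n, (0 < n)%N -> forall y z,
  SigmaA A y -> SigmaA A z -> agree n y z -> `|psi n y - psi n z| <= C'.
Hypothesis c_gt0 : 0 < c.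
Hypothesis psi_le : forall n, (0 < n)%N -> forall z, SigmaA A z -> psi n z <= - c * n%:R.
Hypothesis psi_nonincr : forall n, (0 < n)%N -> forall z, SigmaA A z -> psi n.+1 z <= psi n z.
Hypothesis psi1_ge : forall z, SigmaA A z -> L <= psi 1 z.
Hypothesis Sx : SigmaA A x.

Lemma C_ge0 : 0 <= C.
Proof. by apply: le_trans (psi_almost_add (ltn0Sn 0) (ltn0Sn 0) Sx); rewrite normr_ge0. Qed.

Lemma C'_ge0 : 0 <= C'.
Proof. by apply: le_trans (psi_bounded_var (ltn0Sn 0) Sx Sx (fun _ _ => erefl)); rewrite normr_ge0. Qed.

Lemma psi1_le z : SigmaA A z -> psi 1 z <= - c.
Proof. by move=> Sz; have := psi_le (ltn0Sn 0) Sz; rewrite mulr1. Qed.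

Lemma CL_ge0 : 0 <= C - L.
Proof.
rewrite subr_ge0 (le_trans (psi1_ge Sx)) // (le_trans (psi1_le Sx)) //.
by rewrite (le_trans _ C_ge0) // oppr_le0 ltW.
Qed.

Lemma psiS_ge n : (0 < n)%N -> psi n x + L - C <= psi n.+1 x.
Proof.
move=> n0; have := psi_almost_add n0 (ltn0Sn 0) Sx; rewrite addn1 ler_norml.
by have := psi1_ge (SigmaA_iter_shift n Sx); lra.
Qed.

Lemma psiD_le m n : (0 < m)%N -> (0 < n)%N -> psi (m + n) x <= psi m x - c * n%:R + C.
Proof.
move=> m0 n0; have := psi_almost_add m0 n0 Sx; rewrite ler_norml.
by have := psi_le n0 (SigmaA_iter_shift m Sx); lra.
Qed.

Lemma psi_ge n : (0 < n)%N -> (L - C) * n%:R <= psi n x.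
Proof.
elim: n => [//|[_ _|n IH _]]; first by have := psi1_ge Sx; have := C_ge0; lra.
by have := IH isT; have := psiS_ge (ltn0Sn n); rewrite -[n.+2]addn1 natrD; lra.
Qed.

Definition cyl_diam m := sup [set expR (psi0 psi m z) | z in cyl A x m].

Lemma psi0_pos m z : (0 < m)%N -> psi0 psi m z = psi m z.
Proof. by rewrite /psi0; case: eqP => // ->. Qed.

Lemma expR_psi0_cyl_le m z : cyl A x m z -> expR (psi0 psi m z) <= expR (psi0 psi m x + C').
Proof.
move=> [Sz zx]; rewrite ler_expR; have [->|m0] := posnP m; first by rewrite /psi0 /= add0r C'_ge0.
by rewrite !psi0_pos //; move: (psi_bounded_var m0 Sz Sx zx); rewrite ler_norml; lra.
Qed.

Lemma has_sup_cyl m : has_sup [set expR (psi0 psi m z) | z in cyl A x m].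
Proof.
split; first by exists (expR (psi0 psi m x)); exists x.
by exists (expR (psi0 psi m x + C')) => _ [z hz <-]; exact: expR_psi0_cyl_le.
Qed.

Lemma cyl_diam_ge m z : cyl A x m z -> expR (psi0 psi m z) <= cyl_diam m.
Proof. by move=> hz; apply: ub_le_sup; [case: (has_sup_cyl m)|exists z]. Qed.

Lemma cyl_diam_le m : cyl_diam m <= expR (psi0 psi m x + C').
Proof.
apply: ge_sup; first by exists (expR (psi0 psi m x)); exists x.
by move=> _ [z hz <-]; exact: expR_psi0_cyl_le.
Qed.

Lemma cyl_diam_bounds m : (0 < m)%N ->
  expR (psi m x) <= cyl_diam m <= expR (psi m x + C').
Proof.
by move=> m0; rewrite -psi0_pos // cyl_diam_le andbT; apply: cyl_diam_ge.
Qed.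

Lemma cyl_diam_gt0 m : 0 < cyl_diam m.
Proof. exact: lt_le_trans (expR_gt0 _) (cyl_diam_ge (m := m) (conj Sx (fun _ _ => erefl))). Qed.

Lemma cyl_diamS m : cyl_diam m.+1 <= cyl_diam m.
Proof.
apply: ge_sup; first by exists (expR (psi0 psi m.+1 x)); exists x.
move=> _ [z [Sz zx] <-]; rewrite psi0_pos //.
have [->|m0] := posnP m.
  apply: le_trans (cyl_diam_ge (conj Sx (fun _ _ => erefl))).
  by rewrite /psi0 /= ler_expR (le_trans (psi1_le Sz)) // oppr_le0 ltW.
apply: le_trans (cyl_diam_ge (z := z) _); last by split=> // i /ltnW; apply: zx.
by rewrite psi0_pos // ler_expR psi_nonincr.
Qed.

Lemma cyl_diam_nonincr m n : (m <= n)%N -> cyl_diam n <= cyl_diam m.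
Proof.
move=> /subnK <-; elim: (n - m)%N => [|j IH]; first by rewrite add0n.
by rewrite addSn; apply: le_trans (cyl_diamS _) IH.
Qed.

Lemma cyl_diam_small d : 0 < d -> exists N, forall M, (N <= M)%N -> cyl_diam M < d.
Proof.
move=> d0; exists (Num.truncn ((C' - ln d) / c)).+1 => M NM.
have M0 : (0 < M)%N by apply: leq_trans NM.
have : (C' - ln d) / c < M%:R by apply: lt_le_trans (truncnS_gt _) _; rewrite ler_nat.
rewrite ltr_pdivrMr // => hM.
apply: le_lt_trans (proj2 (andP (cyl_diam_bounds M0))) _.
by rewrite -[X in _ < X]lnK ?posrE // ltr_expR; have := psi_le M0 Sx; lra.
Qed.

Lemma cyl_diam_drop : exists G0, forall M, (0 < M)%N -> cyl_diam (M + G0) < cyl_diam M.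
Proof.
set G0 := (Num.truncn ((C + C') / c)).+1; exists G0 => M M0.
have : (C + C') / c < G0%:R by exact: truncnS_gt.
rewrite ltr_pdivrMr // => hG0.
have /andP[_ hi] := cyl_diam_bounds (ltn_addr G0 M0).
have /andP[lo _] := cyl_diam_bounds M0.
apply: le_lt_trans hi (lt_le_trans _ lo); rewrite ltr_expR.
by have := psiD_le M0 (isT : (0 < G0)%N); lra.
Qed.

Lemma dball_cyl r : 0 < r -> exists M, [/\ dball A psi x r = cyl A x M,
  cyl_diam M < r & forall m, (m < M)%N -> r <= cyl_diam m].
Proof.
move=> r0; have /ex_minnP[M hM Mmin] : exists m, cyl_diam m < r.
  by have [N hN] := cyl_diam_small r0; exists N; apply: hN.
exists M; split => //; first last.
  by move=> m mM; rewrite leNgt; apply/negP => /Mmin; rewrite leqNgt mM.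
apply/seteqP; split => y [Sy hy]; split => //.
- move: hy; rewrite /dPsi; case: pselect => [ex|nex] /=; last first.
    by move=> _ i _; apply: contra_notP nex => ne; exists i; apply/eqP => /esym.
  case: ex_minnP => m _ mmin /Mmin Mm i iM; apply/eqP; rewrite eq_sym.
  by apply: contraTT iM => /mmin mi; rewrite -leqNgt (leq_trans Mm mi).
- rewrite /dPsi; case: pselect => [ex|_] //=; case: ex_minnP => m hm _.
  have Mm : (M <= m)%N by rewrite leqNgt; apply/negP => mM; move: hm; rewrite hy ?eqxx.
  exact: le_lt_trans (cyl_diam_nonincr Mm) hM.
Qed.

Variables (mu : {measure set (shspace k) -> \bar R}) (Cmu : R).
Hypothesis Cmu_gt0 : 0 < Cmu.
Let P := pressure A (fun _ _ => 0 : R).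
Hypothesis mu_cyl : forall n,
  ((Cmu^-1)%:E <= mu (cyl A x n) * (expR (n%:R * P))%:E <= Cmu%:E)%E.

Lemma P_ge0 : 0 <= P.
Proof. exact: pressure0_ge0 Sx. Qed.

Let avg n := psi n x / n%:R.
Let ratio r := ln (fine (mu (dball A psi x r))) / ln r.
(* - P / t, clamped at t = - c to be continuous and nondecreasing on all of R;
   the averages avg n, n > 0, lie below - c. *)
Let dimf t := P / Num.max (- t) c.

Lemma mu_cyl_ln M : exists2 v, mu (cyl A x M) = v%:E & `|ln v + M%:R * P| <= ln Cmu.
Proof. exact: ln_sandwich Cmu_gt0 (measure_ge0 _ _) (mu_cyl M). Qed.

Lemma avg_le n : (0 < n)%N -> avg n <= - c.
Proof. by move=> n0; rewrite /avg ler_pdivrMr ?ltr0n // psi_le. Qed.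

Lemma avg_ge n : L - C <= avg n.
Proof.
have [->|n0] := posnP n; last by rewrite /avg ler_pdivlMr ?ltr0n // psi_ge.
by rewrite /avg invr0 mulr0 -oppr_ge0 opprB CL_ge0.
Qed.

Lemma mulr_avg n : (0 < n)%N -> n%:R * avg n = psi n x.
Proof. by move=> n0; rewrite /avg mulrC divfK // pnatr_eq0 -lt0n. Qed.

Lemma log_ratio_near T Phi : 0 <= T -> 0 <= Phi -> forall e, 0 < e ->
  exists N, forall M M' r, (N <= M)%N -> dball A psi x r = cyl A x M' ->
    `|ln r - psi M x| <= T -> `|M'%:R * P - M%:R * P| <= Phi -> `|ratio r - dimf (avg M)| <= e.
Proof.
move=> T0 Phi0 e e0.
have lnCmu0 : 0 <= ln Cmu.
  by have [v _ hv] := mu_cyl_ln 0; apply: le_trans hv.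
have [N hN] := ratio_approx c_gt0 CL_ge0 T0 (addr_ge0 lnCmu0 Phi0) P_ge0 e0.
exists (maxn N 1) => M M' r NM hball hr hM'.
have M0 : (0 < M)%N by apply: leq_trans NM; rewrite leq_maxr.
have [v hv hlnv] := mu_cyl_ln M'.
rewrite /ratio hball hv /= /dimf max_l; last by have := avg_le M0; lra.
rewrite -mulrNN -invrN; apply: hN; first by apply: leq_trans NM; rewrite leq_maxl.
- by have := avg_le M0; have := avg_ge M; lra.
- by rewrite mulrN mulr_avg // opprK addrC -opprB normrN.
- rewrite -opprD normrN (_ : ln v + _ = (ln v + M'%:R * P) - (M'%:R * P - M%:R * P)).
    by apply: le_trans (ler_normB _ _) _; apply: lerD.
  by ring.
Qed.

Lemma ratio_near_small_radii e : 0 < e -> forall N, exists2 d, 0 < d &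
  forall r, 0 < r -> r < d -> exists2 M, (N <= M)%N & `|ratio r - dimf (avg M)| <= e.
Proof.
move=> e0 N; have T0 : 0 <= C + C' - L by have := CL_ge0; have := C'_ge0; lra.
have [N1 hN1] := log_ratio_near T0 (lexx 0) e0.
exists (cyl_diam (maxn (maxn N N1) 1)) => [|r r0 rN]; first exact: cyl_diam_gt0.
have [M [hball hM Mmin]] := dball_cyl r0.
have NM : (maxn (maxn N N1) 1 < M)%N.
  by rewrite ltnNge; apply/negP => /cyl_diam_nonincr; have := lt_trans hM rN; lra.
have [M1 eM] : exists M1, M = M1.+1 by exists M.-1; lia.
have M10 : (0 < M1)%N by lia.
exists M; first by lia.
apply: hN1 hball _ _; first by lia.
  have /andP[lo _] := cyl_diam_bounds (ltn0Sn M1); rewrite -eM in lo.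
  have /andP[_ hi] := cyl_diam_bounds M10.
  have lnlo : psi M x <= ln r by rewrite ge_lnE // (le_trans lo) // ltW.
  have lnhi : ln r <= psi M1 x + C' by rewrite le_lnE // (le_trans _ hi) // Mmin // eM.
  by have := psiS_ge M10; rewrite -eM ler_norml; lra.
by rewrite subrr normr0.
Qed.

Lemma ratio_near_sampled_radii e d : 0 < e -> 0 < d -> exists N, forall M,
  (N <= M)%N -> exists2 r, 0 < r < d & `|ratio r - dimf (avg M)| <= e.
Proof.
move=> e0 d0; have [G0 hG0] := cyl_diam_drop.
have [N1 hN1] := log_ratio_near C'_ge0 (mulr_ge0 (ler0n _ G0) P_ge0) e0.
have [N2 hN2] := cyl_diam_small d0.
exists (maxn (maxn N1 N2) 1) => M NM.
have M0 : (0 < M)%N by lia.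
exists (cyl_diam M); first by rewrite cyl_diam_gt0 hN2 //; lia.
have [M' [hball hM' M'min]] := dball_cyl (cyl_diam_gt0 M).
have MM' : (M < M')%N by rewrite ltnNge; apply/negP => /cyl_diam_nonincr; lra.
have M'G0 : (M' <= M + G0)%N.
  by rewrite leqNgt; apply/negP => /M'min; have := hG0 M M0; lra.
apply: hN1 hball _ _; first by lia.
  have /andP[lo hi] := cyl_diam_bounds M0.
  have lnlo : psi M x <= ln (cyl_diam M) by rewrite ge_lnE ?cyl_diam_gt0.
  have lnhi : ln (cyl_diam M) <= psi M x + C' by rewrite le_lnE ?cyl_diam_gt0.
  by have := C'_ge0; rewrite ler_norml; lra.
rewrite -mulrBl normrM (ger0_norm P_ge0) ler_wpM2r ?P_ge0 // -natrB ?(ltnW MM') //.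
by rewrite normr_nat ler_nat leq_subLR.
Qed.

Lemma ratio_asymp : asymp_match ratio (dimf \o avg).
Proof. by split; [exact: ratio_near_small_radii|exact: ratio_near_sampled_radii]. Qed.

Lemma bounded_avg : bounded_fun avg.
Proof.
apply/(@ex_bound _ _ _ avg _ (globally_properfilter (a := 0%N) I)).
exists (C - L) => n _ /=; rewrite ler_norml.
have := avg_ge n; have := CL_ge0.
have [->|n0] := posnP n; first by rewrite /avg invr0 mulr0; lra.
by have := avg_le n0; have := c_gt0; lra.
Qed.

Lemma dimf_nondecr : {homo dimf : s t / s <= t}.
Proof.
move=> s t st; apply: ler_wpM2l; first exact: P_ge0.
rewrite lef_pV2 ?posrE ?lt_max ?c_gt0 ?orbT //.
by rewrite ge_max !le_max lexx lerN2 st !orbT.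
Qed.

Lemma dimf_continuous : continuous dimf.
Proof.
move=> t; apply: (@continuousM R R (fun=> P) (fun t => (Num.max (- t) c)^-1)).
  exact: cvg_cst.
have cmax : {for t, continuous (-%R \max (fun=> c))}.
  exact: continuous_max (opp_continuous t) (cvg_cst _).
by apply: continuousV cmax; rewrite /= gt_eqF // lt_max c_gt0 orbT.
Qed.

Lemma dimfE t : t <= - c -> dimf t = - P / t.
Proof.
by move=> tc; rewrite /dimf max_l; [rewrite invrN mulrN mulNr|rewrite lerNr].
Qed.

Lemma lower_locdimE : lower_locdim A mu psi x = (- P / limn_inf avg)%:E.
Proof.
have ul := limn_infP bounded_avg.
have -> : lower_locdim A mu psi x = lim_inf0 ratio by [].
rewrite -dimfE; last exact: is_liminf_le ul avg_le.
exact: lim_inf0_asymp ratio_asymp (is_liminf_comp dimf_nondecr (@dimf_continuous (limn_inf avg)) ul).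
Qed.

Lemma upper_locdimE : upper_locdim A mu psi x = (- P / limn_sup avg)%:E.
Proof.
have ul := is_liminf_limn_supN bounded_avg.
have -> : upper_locdim A mu psi x = lim_sup0 ratio by [].
rewrite -dimfE; last by rewrite lerNr; apply: is_liminf_ge ul _ => n /avg_le /=; rewrite lerNr.
exact: lim_sup0_asymp ratio_asymp (is_liminf_compN dimf_nondecr (@dimf_continuous (limn_sup avg)) ul).
Qed.

End local_dimension.

Theorem lemma2p5 (R : realType) (k : nat) (A : 'I_k.+1 -> 'I_k.+1 -> bool)
    (psi : nat -> seqs k -> R) (mu : {measure set (shspace k) -> \bar R}) :
  topologically_mixing A ->
  in_Fminus A psi ->
  is_mu_max A mu ->
  let Q := fun s : R => pressure A (fun n x => s * psi n x) in
  forall x : seqs k, SigmaA A x ->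
    lower_locdim A mu psi x =
      (- Q 0 / limn_inf (fun n : nat => psi n x / n%:R))%:E /\
    upper_locdim A mu psi x =
      (- Q 0 / limn_sup (fun n : nat => psi n x / n%:R))%:E.
Proof.
(* Mixing only serves to produce mu_max, whose Gibbs property is assumed. *)
move=> _ [_ [[C psi_aa] [[C' psi_bv] [c [c0 [psi_le psi_nonincr]]]]]].
move=> [_ [_ [_ [Cmu [Cmu0 mu_cyl]]]]] Q x Sx.
have [L psi1_ge] : exists L, forall z, SigmaA A z -> L <= psi 1%N z.
  apply: (SigmaA_lbound (C' := C')) => y z Sy Sz yz.
  by apply: psi_bv => // i; rewrite ltnS leqn0 => /eqP ->.
have -> : Q 0 = pressure A (fun _ _ => 0).
  by congr pressure; apply/funext => n; apply/funext => z; rewrite mul0r.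
split.
  exact (lower_locdimE psi_aa psi_bv c0 psi_le psi_nonincr psi1_ge Sx Cmu0 (mu_cyl x Sx)).
exact (upper_locdimE psi_aa psi_bv c0 psi_le psi_nonincr psi1_ge Sx Cmu0 (mu_cyl x Sx)).
Qed.
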